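(* Let $C$ be a linear $[n,k,d]_q$ code with covering radius $\rho$, and let $C'=\{(a,x_1,\dots,x_n): a\in\mathbb{F}_q,\ (x_1,\dots,x_n)\in C\}\subseteq\mathbb{F}_q^{n+1}$ be its $q$-repeated code. Then $C'$ has covering radius $\rho'=\rho$ and minimum distance $d'=1$. Moreover, $C'$ is completely regular if and only if $C$ is completely regular.
   Context: $\mathbb{F}_q$ is the finite field with $q$ elements. Hamming weight $\mathrm{wt}$ and distance $d({\bf x},{\bf y})=\mathrm{wt}({\bf x}-{\bf y})$; $d({\bf v},C)=\min_{{\bf x}\in C}d({\bf v},{\bf x})$; covering radius $\rho=\max_{{\bf v}}d({\bf v},C)$. A code $C$ is completely regular if for every vector ${\bf x}$, with $t=d({\bf x},C)$, the number of codewords at distance $i$ from ${\bf x}$ depends only on $t$ and $i$. *)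

From HB Require Import structures.
From mathcomp Require Import all_boot all_order all_algebra all_field.
Set Implicit Arguments. Unset Strict Implicit. Unset Printing Implicit Defensive.
Import GRing.Theory.
Local Open Scope ring_scope.

Section Codes.
Variable F : finFieldType.

Definition wt n (x : 'rV[F]_n) : nat := #|[set i : 'I_n | x 0 i != 0]|.
Definition hdist n (x y : 'rV[F]_n) : nat := wt (x - y).

Definition linear_code n (C : {set 'rV[F]_n}) : Prop :=
  0 \in C /\ forall (a : F) (x y : 'rV[F]_n), x \in C -> y \in C -> a *: x + y \in C.

(* d(v, C) = min_{x in C} d(v, x); distances are <= n so n is a neutral default
   for nonempty C. *)
Definition dist_to_code n (C : {set 'rV[F]_n}) (v : 'rV[F]_n) : nat :=
  \big[minn/n]_(x in C) hdist v x.

Definition covering_radius n (C : {set 'rV[F]_n}) : nat :=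
  \max_(v : 'rV[F]_n) dist_to_code C v.

(* minimum distance = min over distinct pairs of codewords
   (default n.+1 only matters for codes with < 2 codewords). *)
Definition min_distance n (C : {set 'rV[F]_n}) : nat :=
  \big[minn/n.+1]_(x in C) \big[minn/n.+1]_(y in C | y != x) hdist x y.

Definition completely_regular n (C : {set 'rV[F]_n}) : Prop :=
  forall x y : 'rV[F]_n, dist_to_code C x = dist_to_code C y ->
    forall i : nat, #|[set c in C | hdist x c == i]| = #|[set c in C | hdist y c == i]|.

Definition repeated_code n (C : {set 'rV[F]_n}) : {set 'rV[F]_n.+1} :=
  [set x : 'rV[F]_n.+1 | \row_(j < n) x 0 (lift ord0 j) \in C].

End Codes.

From HB Require Import structures.
From mathcomp Require Import all_boot all_order all_algebra all_field.
Set Implicit Arguments. Unset Strict Implicit. Unset Printing Implicit Defensive.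
Import Order.TTheory GRing.Theory.

(* Write a word of F^(n+1) as (a, u) with a in F and u in F^n.  Then
   d((a,u), (b,v)) = [a != b] + d(u, v), and (b, v) lies in the repeated code
   iff v lies in C.  Minimising over b = a gives d((a,u), C') = d(u, C), whence
   rho' = rho, and (0, c), (1, c) are codewords at distance 1.  Splitting the
   codewords of C' at distance i from (a, u) according to b = a or b != a gives
   N'_i(a,u) = N_i(u) + (q - 1) N_(i-1)(u): the N_i(u) determine the N'_i(a,u)
   and conversely, by induction on i. *)

Section BigMinn.
Variables (I : finType) (P : pred I) (f : I -> nat) (m : nat).

Lemma geq_bigminn_cond j : P j -> \big[minn/m]_(i | P i) f i <= f j.
Proof. by move=> Pj; rewrite -Order.NatOrder.minEnat; exact: (bigmin_le_cond (T:=nat)). Qed.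

Lemma leq_bigminn k :
  k <= m -> (forall i, P i -> k <= f i) -> k <= \big[minn/m]_(i | P i) f i.
Proof. by move=> km kf; rewrite -Order.NatOrder.minEnat; exact/(bigmin_geP (T:=nat)). Qed.

Lemma bigminn_attained j : P j -> (forall i, P i -> f i <= m) ->
  exists2 i, P i & \big[minn/m]_(i | P i) f i = f i.
Proof.
move=> Pj fm; rewrite -Order.NatOrder.minEnat (@bigmin_eq_arg _ nat _ m j P f Pj) //.
by case: arg_minP => // i Pi _; exists i.
Qed.

End BigMinn.

Section HammingSpace.
Variables (F : finFieldType) (n : nat).
Implicit Types (x y u v : 'rV[F]_n) (C : {set 'rV[F]_n}).

Lemma wt_sum x : wt x = \sum_i (x 0%R i != 0%R).
Proof. by rewrite /wt -sum1dep_card big_mkcond. Qed.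

Lemma wt_le_dim x : wt x <= n.
Proof. by rewrite /wt (leq_trans (max_card _)) ?card_ord. Qed.

Lemma wt_eq0 x : (wt x == 0) = (x == 0%R).
Proof.
rewrite /wt cards_eq0; apply/eqP/eqP => [x0 | ->]; last first.
  by apply/setP => i; rewrite !inE mxE eqxx.
apply/rowP => i; rewrite mxE; apply/eqP.
by have := in_set0 i; rewrite -x0 inE => /negbFE.
Qed.

Lemma hdistxx x : hdist x x = 0.
Proof. by apply/eqP; rewrite /hdist subrr wt_eq0. Qed.

Lemma hdist_gt0 x y : x != y -> 0 < hdist x y.
Proof. by rewrite lt0n /hdist wt_eq0 subr_eq0. Qed.

Lemma dist_to_code_le C v c : c \in C -> dist_to_code C v <= hdist v c.
Proof. exact: geq_bigminn_cond. Qed.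

Lemma dist_to_code_attained C v c0 : c0 \in C ->
  exists2 c, c \in C & dist_to_code C v = hdist v c.
Proof. by move=> C_c0; apply: (bigminn_attained C_c0) => c _; exact: wt_le_dim. Qed.

Lemma min_distance_le C x y :
  x \in C -> y \in C -> x != y -> min_distance C <= hdist x y.
Proof.
move=> Cx Cy xy; apply: leq_trans (geq_bigminn_cond _ _ Cx) _.
by apply: geq_bigminn_cond; rewrite Cy eq_sym.
Qed.

Lemma min_distance_gt0 C : 0 < min_distance C.
Proof.
apply: leq_bigminn => // x _; apply: leq_bigminn => // y /andP[_ yx].
by rewrite hdist_gt0 // eq_sym.
Qed.

End HammingSpace.

Section RowCons.
Variables (F : finFieldType) (n : nat).
Implicit Types (a b : F) (u v : 'rV[F]_n) (x : 'rV[F]_n.+1).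

Definition row_cons a u : 'rV[F]_n.+1 :=
  \row_j (if unlift ord0 j is Some k then u 0%R k else a).

Definition row_behead x : 'rV[F]_n := \row_(k < n) x 0%R (lift ord0 k).

Lemma row_cons_head a u : row_cons a u 0%R ord0 = a.
Proof. by rewrite mxE unlift_none. Qed.

Lemma row_beheadK a u : row_behead (row_cons a u) = u.
Proof. by apply/rowP => k; rewrite !mxE liftK. Qed.

Lemma row_consK x : row_cons (x 0%R ord0) (row_behead x) = x.
Proof. by apply/rowP => j; rewrite !mxE; case: unliftP => [k ->|->]; rewrite ?mxE. Qed.

Lemma row_cons_ind (P : 'rV[F]_n.+1 -> Prop) :
  (forall a u, P (row_cons a u)) -> forall x, P x.
Proof. by move=> Pcons x; rewrite -[x]row_consK. Qed.

Lemma wt_row_cons a u : wt (row_cons a u) = (a != 0%R) + wt u.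
Proof.
rewrite !wt_sum big_ord_recl row_cons_head; congr (_ + _).
by apply: eq_bigr => k _; rewrite mxE liftK.
Qed.

Lemma row_cons_sub a b u v : (row_cons a u - row_cons b v = row_cons (a - b) (u - v))%R.
Proof. by apply/rowP => j; rewrite !mxE; case: unlift => [k|]; rewrite ?mxE. Qed.

Lemma hdist_row_cons a b u v :
  hdist (row_cons a u) (row_cons b v) = (a != b) + hdist u v.
Proof. by rewrite /hdist row_cons_sub wt_row_cons subr_eq0. Qed.

End RowCons.

Section RepeatedCode.
Variables (F : finFieldType) (n : nat) (C : {set 'rV[F]_n}).
Local Notation C' := (repeated_code C).

Lemma row_cons_repeated_code a u : (row_cons a u \in C') = (u \in C).
Proof. by rewrite inE -/(row_behead (row_cons a u)) row_beheadK. Qed.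

Lemma dist_repeated_code a u c0 : c0 \in C ->
  dist_to_code C' (row_cons a u) = dist_to_code C u.
Proof.
move=> C_c0; apply/eqP; rewrite eqn_leq; apply/andP; split.
  have [c Cc ->] := dist_to_code_attained u C_c0.
  have C'_ac : row_cons a c \in C' by rewrite row_cons_repeated_code.
  by have := dist_to_code_le (row_cons a u) C'_ac; rewrite hdist_row_cons eqxx.
have C'_c0 : row_cons a c0 \in C' by rewrite row_cons_repeated_code.
have [x + ->] := dist_to_code_attained (row_cons a u) C'_c0.
elim/row_cons_ind: x => b v; rewrite row_cons_repeated_code hdist_row_cons => Cv.
exact: leq_trans (dist_to_code_le u Cv) (leq_addl _ _).
Qed.

Lemma covering_radius_repeated_code c0 : c0 \in C ->
  covering_radius C' = covering_radius C.
Proof.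
move=> C_c0; apply/eqP; rewrite eqn_leq; apply/andP; split.
  apply/bigmax_leqP => x _; elim/row_cons_ind: x => a u.
  by rewrite (dist_repeated_code _ _ C_c0) leq_bigmax.
by apply/bigmax_leqP => u _; rewrite -(dist_repeated_code 0%R u C_c0) leq_bigmax.
Qed.

Lemma min_distance_repeated_code c : c \in C -> min_distance C' = 1.
Proof.
move=> Cc; apply/eqP; rewrite eqn_leq min_distance_gt0 andbT.
have C'_c a : row_cons a c \in C' by rewrite row_cons_repeated_code.
have neq01 : row_cons 0%R c != row_cons 1%R c.
  apply: contra_neq (oner_neq0 F) => /(congr1 (fun x : 'rV_n.+1 => x 0%R ord0)).
  by rewrite !row_cons_head.
apply: leq_trans (min_distance_le (C'_c _) (C'_c _) neq01) _.
by rewrite hdist_row_cons hdistxx eq_sym oner_neq0.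
Qed.

Lemma card_repeated_sphere a u i :
  #|[set c in C' | hdist (row_cons a u) c == i]| =
  #|[set c in C | hdist u c == i]| +
  #|F|.-1 * (if i is i'.+1 then #|[set c in C | hdist u c == i']| else 0).
Proof.
rewrite -sum1dep_card (reindex (fun p : F * 'rV_n => row_cons p.1 p.2)) /=; last first.
  exists (fun x : 'rV_n.+1 => (x 0%R ord0, row_behead x)) => [[b v]|x] _ /=.
    by rewrite row_cons_head row_beheadK.
  exact: row_consK.
under eq_bigl => p do rewrite row_cons_repeated_code hdist_row_cons.
rewrite -(pair_big_dep xpredT (fun b v => (v \in C) && ((a != b) + hdist u v == i))
                      (fun _ _ => 1)) /=.
rewrite (bigD1 a) //= sum1dep_card eqxx /=; congr (_ + _).
under eq_bigr => b ab do rewrite eq_sym ab sum1dep_card.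
rewrite sum_nat_const cardC1; congr (_ * _).
case: i => [|i] //; apply/eqP; rewrite cards_eq0; apply/eqP/setP => v.
by rewrite !inE andbF.
Qed.

Lemma completely_regular_from_repeated_code c0 : c0 \in C ->
  completely_regular C' -> completely_regular C.
Proof.
move=> C_c0 crC' u v duv.
have /crC' crC'_0 : dist_to_code C' (row_cons 0%R u) = dist_to_code C' (row_cons 0%R v).
  by rewrite !(dist_repeated_code _ _ C_c0).
elim=> [|i IH].
  by have := crC'_0 0; rewrite !card_repeated_sphere !muln0 !addn0.
by have /eqP := crC'_0 i.+1; rewrite !card_repeated_sphere IH eqn_add2r => /eqP.
Qed.

Lemma completely_regular_repeated_code c0 : c0 \in C ->
  completely_regular C -> completely_regular C'.
Proof.
move=> C_c0 crC x y; elim/row_cons_ind: x => a u; elim/row_cons_ind: y => b v.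
rewrite !(dist_repeated_code _ _ C_c0) => /crC crC_uv.
by case=> [|i]; rewrite 2!card_repeated_sphere ?crC_uv // 2!crC_uv.
Qed.

End RepeatedCode.

Theorem theorem2p3 (F : finFieldType) (n : nat) (C : {set 'rV[F]_n}) :
  linear_code C ->
  [/\ covering_radius (repeated_code C) = covering_radius C,
      min_distance (repeated_code C) = 1%N
    & completely_regular (repeated_code C) <-> completely_regular C].
Proof.
move=> [C0 _]; split.
- exact: covering_radius_repeated_code C0.
- exact: min_distance_repeated_code C0.
- split; first exact: completely_regular_from_repeated_code C0.
  exact: completely_regular_repeated_code C0.
Qed.
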